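(* Let $T$ be a tree on $n$ vertices whose characteristic polynomial is irreducible over $\mathbb{Q}$, and order the vertices according to the bipartition so that $A(T)=\begin{bmatrix} O & M\\ M^{\mathrm T} & O\end{bmatrix}$. Then $\Delta(T)=2^n\Delta^2(M^{\mathrm T}M)$.
   Context: For a monic polynomial $f$ of degree $k$ with roots $\alpha_1,\dots,\alpha_k$, the discriminant is $\Delta(f)=\prod_{1\le i<j\le k}(\alpha_i-\alpha_j)^2$. For a square matrix $B$, $\Delta(B)$ is the discriminant of $\det(xI-B)$; $\Delta(T)$ is the discriminant of the adjacency matrix $A(T)$. *)

From HB Require Import structures.
From mathcomp Require Import all_boot all_order all_algebra all_field.
Set Implicit Arguments. Unset Strict Implicit. Unset Printing Implicit Defensive.
Import Order.TTheory GRing.Theory Num.Theory.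
Local Open Scope ring_scope.

Definition simple_graph n (T : rel 'I_n) : Prop :=
  symmetric T /\ irreflexive T.

Definition graph_connected n (T : rel 'I_n) : Prop :=
  forall x y : 'I_n, connect T x y.

Definition graph_acyclic n (T : rel 'I_n) : Prop :=
  forall c : seq 'I_n, uniq c -> (2 < size c)%N -> ~~ cycle T c.

Definition is_tree n (T : rel 'I_n) : Prop :=
  [/\ simple_graph T, graph_connected T & graph_acyclic T].

Definition adjmx (R : nzRingType) n (T : rel 'I_n) : 'M[R]_n :=
  \matrix_(i, j) (T i j)%:R.

Definition roots_of (p : {poly algC}) : seq algC :=
  sval (closed_field_poly_normal p).

Definition disc (p : {poly algC}) : algC :=
  let r := roots_of p in
  \prod_(i < size r) \prod_(j < size r | (i < j)%N) (r`_i - r`_j) ^+ 2.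

Definition disc_mx k (B : 'M[algC]_k) : algC := disc (char_poly B).

Definition disc_graph n (T : rel 'I_n) : algC := disc_mx (adjmx algC T).

From HB Require Import structures.
From mathcomp Require Import all_boot all_order all_algebra all_field.
From mathcomp Require Import ring fingroup perm.
Set Implicit Arguments. Unset Strict Implicit. Unset Printing Implicit Defensive.
Import Order.TTheory GRing.Theory Num.Theory.
Local Open Scope ring_scope.

(* Then det(xI - A) = x^(p-q) g(x^2)
   with g = det(xI - M^T M), and irreducibility forces A to be nonsingular,
   so p = q and det M <> 0. Two perfect matchings of the bipartite forest T
   would combine into an alternating cycle, so the Leibniz expansion of
   det M has a single nonzero term: det M = +-1. Writing the discriminant
   as +- prod f'(a) over the roots a of f gives
   disc(g(x^2)) = (-4)^p g(0) disc(g)^2, and (-4)^p g(0) = 4^p (det M)^2. *)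

Lemma prodrMl_const (R : comNzRingType) (I : Type) (r : seq I) (c : R) F :
  \prod_(i <- r) (c * F i) = c ^+ size r * \prod_(i <- r) F i.
Proof. by rewrite big_split /= big_const_seq count_predT iter_mulr_1. Qed.

Definition disc_seq (r : seq algC) : algC :=
  \prod_(i < size r) \prod_(j < size r | (i < j)%N) (r`_i - r`_j) ^+ 2.

Lemma disc_seq_cons a r :
  disc_seq (a :: r) = \prod_(x <- r) (a - x) ^+ 2 * disc_seq r.
Proof.
rewrite /disc_seq /= big_ord_recl; congr (_ * _).
  rewrite big_mkcond big_ord_recl /= mul1r [RHS](big_nth 0) big_mkord.
  by apply: eq_bigr => j _.
apply: eq_bigr => i _; rewrite big_mkcond big_ord_recl /= mul1r [RHS]big_mkcond.
by apply: eq_bigr => j _.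
Qed.

Lemma prod_deriv_prod_XsubC r :
  \prod_(x <- r) (\prod_(y <- r) ('X - y%:P))^`().[x] =
  (-1) ^+ 'C(size r, 2) * disc_seq r.
Proof.
elim: r => [|a r IH]; first by rewrite !big_nil /disc_seq big_ord0 mulr1.
set P := \prod_(y <- r) ('X - y%:P).
have P_root x : x \in r -> P.[x] = 0 by move=> x_r; apply/rootP; rewrite root_prod_XsubC.
have -> : \prod_(y <- a :: r) ('X - y%:P) = ('X - a%:P) * P by rewrite big_cons.
rewrite big_cons derivM derivXsubC mul1r.
rewrite hornerD hornerM hornerXsubC subrr mul0r addr0.
rewrite big_seq (eq_bigr (fun x => (x - a) * P^`().[x])) -?big_seq; last first.
  by move=> x x_r; rewrite hornerD hornerM hornerXsubC P_root // add0r.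
rewrite big_split /= IH disc_seq_cons binS bin1 exprD /P horner_prod.
under [\prod_(x <- r) (x - a)]eq_bigr => x _ do rewrite -opprB -mulN1r.
under [\prod_(x <- r) _.[a]]eq_bigr => x _ do rewrite hornerXsubC.
by rewrite prodrMl_const prodrXl; ring.
Qed.

Lemma disc_seq_perm r s : perm_eq r s -> disc_seq r = disc_seq s.
Proof.
move=> rs; apply: (inv_inj (signrMK 'C(size r, 2))) => /=.
rewrite -prod_deriv_prod_XsubC (perm_size rs) -prod_deriv_prod_XsubC.
have -> : \prod_(x <- r) ('X - x%:P) = \prod_(x <- s) ('X - x%:P) := perm_big s rs.
exact: perm_big.
Qed.

Lemma roots_ofE (f : {poly algC}) :
  f \is monic -> f = \prod_(x <- roots_of f) ('X - x%:P).
Proof.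
rewrite /roots_of; case: closed_field_poly_normal => r /= f_eq /monicP f_monic.
by rewrite {1}f_eq f_monic scale1r.
Qed.

Lemma disc_prod_XsubC r : disc (\prod_(x <- r) ('X - x%:P)) = disc_seq r.
Proof.
apply: disc_seq_perm; apply: prod_XsubC_eq; rewrite -roots_ofE //.
exact: monic_prod_XsubC.
Qed.

Lemma prod_XsubC_comp_X2 (r : seq algC) :
  \prod_(x <- r) ('X - x%:P) \Po 'X^2 =
  \prod_(y <- map sqrtC r ++ map (fun x => - sqrtC x) r) ('X - y%:P).
Proof.
rewrite big_cat !big_map /= -big_split rmorph_prod; apply: eq_bigr => x _ /=.
rewrite comp_polyB comp_polyX comp_polyC -{1}(sqrtCK x) (rmorphXn polyC).
by rewrite subr_sqr polyCN opprK.
Qed.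

Lemma horner_deriv_comp_X2 (R : comNzRingType) (f : {poly R}) x :
  (f \Po 'X^2)^`().[x] = f^`().[x ^+ 2] * (x *+ 2).
Proof.
by rewrite deriv_comp derivXn hornerM horner_comp hornerXn hornerMn hornerX.
Qed.

Lemma sign_bin2_double (R : nzRingType) m : (-1) ^+ 'C(m + m, 2) = (-1) ^+ m :> R.
Proof.
rewrite -signr_odd -[RHS]signr_odd bin2 addnn -doubleMl half_double oddM.
by case: m => // m; rewrite doubleS /= odd_double andbT.
Qed.

(* The roots of f(x^2) are the two square roots of each root of f; the
   derivative of f(x^2) at +-sqrt(x) is f'(x) * (+-2 sqrt(x)). *)
Lemma disc_seq_sqrt (r : seq algC) :
  disc_seq (map sqrtC r ++ map (fun x => - sqrtC x) r) =
  4 ^+ size r * \prod_(x <- r) x * disc_seq r ^+ 2.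
Proof.
set s := map _ _ ++ _; set P := \prod_(x <- r) ('X - x%:P).
have := prod_deriv_prod_XsubC s.
rewrite size_cat !size_map sign_bin2_double => /esym /(canRL (signrMK _)) ->.
rewrite -prod_XsubC_comp_X2 -/P big_cat !big_map /= -big_split /=.
rewrite (eq_bigr (fun x => -4 * (P^`().[x] ^+ 2 * x))) => [|x _]; last first.
  rewrite !horner_deriv_comp_X2 sqrrN sqrtCK.
  by rewrite -[X in _ = _ * (_ * X)](sqrtCK x); ring.
rewrite prodrMl_const big_split /= prodrXl prod_deriv_prod_XsubC exprMn sqrr_sign.
by rewrite mul1r -[-4](mulN1r 4) exprMn -!mulrA signrMK; ring.
Qed.

Lemma disc_comp_X2 (f : {poly algC}) :
  f \is monic -> disc (f \Po 'X^2) = (-4) ^+ (size f).-1 * f`_0 * disc f ^+ 2.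
Proof.
move=> /roots_ofE ->; set r := roots_of f.
rewrite prod_XsubC_comp_X2 !disc_prod_XsubC disc_seq_sqrt size_prod_XsubC /=.
rewrite coef0_prod_XsubC -[-4](mulN1r 4) exprMn [_ * 4 ^+ _]mulrC -!mulrA.
by rewrite signrMK.
Qed.

Section CharPoly.
Variable R : comNzRingType.

Lemma char_poly_perm n (s : 'S_n) (A : 'M[R]_n) :
  char_poly (\matrix_(i, j) A (s i) (s j)) = char_poly A.
Proof.
rewrite /char_poly; have -> : char_poly_mx (\matrix_(i, j) A (s i) (s j)) =
    perm_mx s *m char_poly_mx A *m perm_mx s^-1.
  rewrite -row_permE -col_permE; apply/matrixP => i j.
  by rewrite !mxE (inj_eq perm_inj).
by rewrite !det_mulmx !det_perm odd_permV mulrAC -expr2 sqrr_sign mul1r.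
Qed.

Lemma char_poly_comp_X2 k (N : 'M[R]_k) :
  char_poly N \Po 'X^2 = \det ('X^2%:M - map_mx polyC N).
Proof.
rewrite /char_poly /char_poly_mx -det_map_mx map_mxB map_scalar_mx /= comp_polyX.
by congr (\det (_ - _)); apply/matrixP => i j; rewrite !mxE comp_polyC.
Qed.

Variables (p q : nat) (A : 'M[R]_(p, q)) (B : 'M[R]_(q, p)).

Lemma char_poly_mx_block0 :
  char_poly_mx (block_mx 0 A B 0) =
  block_mx 'X%:M (- map_mx polyC A) (- map_mx polyC B) 'X%:M.
Proof.
rewrite /char_poly_mx (scalar_mx_block p q) map_block_mx opp_block_mx.
by rewrite add_block_mx !map_mx0 !oppr0 !addr0 !add0r.
Qed.

(* Multiply det(xI - [0 A; B 0]) by the determinant x^(p+q) of a triangular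
   block matrix so as to make the product block triangular. *)
Lemma char_poly_block0_l :
  char_poly (block_mx 0 A B 0) * 'X^(p + q) =
  'X^(p + p) * (char_poly (B *m A) \Po 'X^2).
Proof.
have -> : 'X^(p + q) = \det (block_mx 'X%:M (map_mx polyC A) 0 'X%:M).
  by rewrite det_ublock !det_scalar exprD.
rewrite /char_poly -det_mulmx char_poly_mx_block0 mulmx_block.
rewrite !mulmx0 !addr0 !mul_scalar_mx !mul_mx_scalar scalerN subrr det_lblock.
rewrite !scale_scalar_mx det_scalar -expr2 -exprM mul2n -addnn char_poly_comp_X2.
by rewrite mulNmx addrC map_mxM.
Qed.

Lemma char_poly_block0_r :
  char_poly (block_mx 0 A B 0) * 'X^(p + q) =
  (char_poly (A *m B) \Po 'X^2) * 'X^(q + q).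
Proof.
have -> : 'X^(p + q) = \det (block_mx 'X%:M 0 (map_mx polyC B) 'X%:M).
  by rewrite det_lblock !det_scalar exprD.
rewrite /char_poly -det_mulmx char_poly_mx_block0 mulmx_block.
rewrite !mulmx0 !add0r !mul_scalar_mx !mul_mx_scalar !scalerN addNr det_ublock.
rewrite !scale_scalar_mx det_scalar -expr2 -exprM mul2n -addnn char_poly_comp_X2.
by rewrite mulNmx map_mxM.
Qed.

Lemma char_poly_block0_coef0 : p != q -> (char_poly (block_mx 0 A B 0))`_0 = 0.
Proof.
have X_reg k : GRing.rreg ('X^k : {poly R}) by apply/monic_rreg/monicXn.
case: ltngtP => // [p_lt_q | q_lt_p] _.
- have Xq : 'X^(q + q) = 'X^(q - p) * 'X^(p + q) :> {poly R}.
    by rewrite -exprD addnA subnK // ltnW.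
  have := char_poly_block0_r; rewrite Xq mulrA => /X_reg ->.
  by rewrite coefMXn subn_gt0 p_lt_q.
- have Xp : 'X^(p + p) = 'X^(p - q) * 'X^(p + q) :> {poly R}.
    by rewrite -exprD addnCA subnK // ltnW.
  have := char_poly_block0_l; rewrite Xp mulrAC => /X_reg ->.
  by rewrite mulrC coefMXn subn_gt0 q_lt_p.
Qed.

End CharPoly.

Lemma char_poly_block0_sq (R : comNzRingType) p (A B : 'M[R]_p) :
  char_poly (block_mx 0 A B 0) = char_poly (B *m A) \Po 'X^2.
Proof.
apply: (@monic_rreg _ 'X^(p + p)); first exact: monicXn.
by rewrite char_poly_block0_l mulrC.
Qed.

Section Interleave.
Variables (S T : Type) (f g : S -> T).

Definition interleave (s : seq S) : seq T := flatten [seq [:: f x; g x] | x <- s].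

Lemma size_interleave s : size (interleave s) = (size s).*2.
Proof. by elim: s => //= x s ->. Qed.

Lemma path_interleave (e : rel T) b s :
  path e (g b) (interleave s) =
  path (fun x y => e (g x) (f y) && e (f y) (g y)) b s.
Proof. by elim: s b => //= x s IH b; rewrite IH andbA. Qed.

Lemma cycle_interleave (e : rel T) s :
  path.cycle e (interleave s) =
  path.cycle (fun x y => e (g x) (f y) && e (f y) (g y)) s.
Proof.
case: s => // x s; rewrite (cycle_path (f x)) (cycle_path x) -path_interleave.
suff -> : last (f x) (interleave (x :: s)) = g (last x s) by [].
by elim: s x => //= y s IH x; rewrite IH.
Qed.

End Interleave.

Section InterleaveUniq.
Variables (S T : eqType) (f g : S -> T).
Hypotheses (f_inj : injective f) (g_inj : injective g).
Hypothesis fg_neq : forall x y, f x != g y.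

Lemma mem_interleave y s :
  (y \in interleave f g s) = (y \in map f s) || (y \in map g s).
Proof.
elim: s => //= x s IH; rewrite !inE IH -!orbA; congr orb; exact: orbCA.
Qed.

Lemma uniq_interleave s : uniq s -> uniq (interleave f g s).
Proof.
have fg x s' : (f x \in map g s') = false.
  by apply/negbTE/mapP => -[y _ /eqP]; rewrite (negbTE (fg_neq x y)).
have gf x s' : (g x \in map f s') = false.
  by apply/negbTE/mapP => -[y _ /eqP]; rewrite eq_sym (negbTE (fg_neq y x)).
elim: s => //= x s IH /andP[x_s s_uniq].
rewrite !inE !mem_interleave (mem_map f_inj) (mem_map g_inj) fg gf.
by rewrite (negbTE (fg_neq x x)) (negbTE x_s); exact: IH.
Qed.

End InterleaveUniq.

Section ForestMatching.
Variables (V : finType) (e : rel V).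
Hypothesis e_sym : symmetric e.
Hypothesis e_acyclic :
  forall c : seq V, uniq c -> (2 < size c)%N -> ~~ path.cycle e c.
Variables (m : nat) (u v : 'I_m -> V).
Hypotheses (u_inj : injective u) (v_inj : injective v).
Hypothesis uv_neq : forall i j, u i != v j.

Definition matching (s : 'S_m) : bool := [forall i, e (u i) (v (s i))].

Lemma matching_unique s t : matching s -> matching t -> s = t.
Proof.
move=> /forallP e_s /forallP e_t; apply/permP => i0; apply/eqP/negPn/negP => st.
pose rho := (s * t^-1)%g.
have t_rho x : t (rho x) = s x by rewrite permM permKV.
have rho_i0 : rho i0 != i0 by apply: contra st => /eqP rho_i0; rewrite -t_rho rho_i0.
pose o := orbit rho i0.
have o_gt1 : (1 < size o)%N.
  rewrite size_orbit ltn_neqAle fingraph.order_gt0 andbT.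
  apply: contra rho_i0 => /eqP o1.
  by have := mem_orbit (in_orbit rho i0); rewrite /orbit -o1 inE.
have vs_inj : injective (v \o s) by move=> x y /v_inj/perm_inj.
apply: (negP (e_acyclic (uniq_interleave u_inj vs_inj
  (fun x y => uv_neq x (s y)) (orbit_uniq rho i0)) _)).
  by rewrite size_interleave -addnn (leq_add o_gt1 (ltnW o_gt1)).
rewrite cycle_interleave; apply: sub_cycle (cycle_orbit (@perm_inj _ rho) i0).
by move=> x _ /eqP <-; rewrite /= -t_rho e_sym e_t e_s.
Qed.

Lemma det_matching_sqr (R : comNzRingType) (M : 'M[R]_m) :
  (forall i j, M i j = (e (u i) (v j))%:R) -> \det M != 0 -> \det M ^+ 2 = 1.
Proof.
move=> M_e; have term (s : 'S_m) : \prod_i M i (s i) = (matching s)%:R.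
  have [/forallP e_s | /forallPn[i not_e]] := boolP (matching s).
    by rewrite big1 // => i _; rewrite M_e e_s.
  by rewrite (bigD1 i) //= M_e (negbTE not_e) mul0r.
have [s0 match_s0 | no_match] := pickP matching; last first.
  rewrite /determinant big1 ?eqxx // => s _.
  by rewrite term no_match mulr0.
suff -> : \det M = (-1) ^+ s0 by rewrite sqrr_sign.
rewrite /determinant (bigD1 s0) //= term match_s0 mulr1 big1 ?addr0 // => s s_s0.
have [match_s | ] := boolP (matching s); last by rewrite term => /negbTE->; rewrite mulr0.
by move: s_s0; rewrite (matching_unique match_s match_s0) eqxx.
Qed.

End ForestMatching.

Lemma irreducible_poly_coef0 (F : fieldType) (f : {poly F}) :
  (2 < size f)%N -> irreducible_poly f -> f`_0 != 0.
Proof.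
move=> f_gt2 [_ f_irr]; apply: contraTneq f_gt2 => f0.
have X_dvd : 'X - 0%:P %| f by rewrite -root_factor_theorem rootE horner_coef0 f0.
by rewrite -(eqp_size (f_irr _ _ X_dvd)) size_XsubC.
Qed.

Lemma map_adjmx (R S : nzRingType) (f : {rmorphism R -> S}) n (T : rel 'I_n) :
  map_mx f (adjmx R T) = adjmx S T.
Proof. by apply/matrixP => i j; rewrite !mxE rmorph_nat. Qed.

Theorem corollary4p3 (n : nat) (T : rel 'I_n)
  (Hn : (2 <= n)%N) (HT : is_tree T)
  (Hirr : irreducible_poly (char_poly (adjmx rat T)))
  (p q : nat) (sigma : 'I_(p + q) -> 'I_n) (Hsigma : bijective sigma)
  (M : 'M[algC]_(p, q))
  (HA : forall i j : 'I_(p + q),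
      adjmx algC T (sigma i) (sigma j) = block_mx 0 M M^T 0 i j) :
  disc_graph T = 2 ^+ n * (disc_mx (M^T *m M)) ^+ 2.
Proof.
have n_pq : n = (p + q)%N by rewrite -[n]card_ord -(bij_eq_card Hsigma) card_ord.
subst n; case: HT => [[T_sym _] _ T_acyclic].
have sigma_inj := bij_inj Hsigma.
have chiT : char_poly (adjmx algC T) = char_poly (block_mx 0 M M^T 0).
  rewrite -(char_poly_perm (perm sigma_inj)); congr char_poly.
  by apply/matrixP => i j; rewrite mxE !permE HA.
have chi0 : (char_poly (block_mx 0 M M^T 0))`_0 != 0.
  rewrite -chiT -(map_adjmx ratr) -map_char_poly coef_map fmorph_eq0.
  by apply: irreducible_poly_coef0; rewrite ?size_char_poly.
have /eqP p_q : p == q by apply: contraNT chi0 => /char_poly_block0_coef0 ->.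
subst q; have chiA := char_poly_block0_sq M M^T.
have g0 : (char_poly (M^T *m M))`_0 = (-1) ^+ p * \det M ^+ 2.
  by rewrite char_poly_det det_mulmx det_tr.
have detM2 : \det M ^+ 2 = 1.
  apply: (det_matching_sqr T_sym T_acyclic (u := fun i => sigma (lshift p i))
    (v := fun j => sigma (rshift p j))).
  - by move=> i j /sigma_inj/lshift_inj.
  - by move=> i j /sigma_inj/rshift_inj.
  - by move=> i j; rewrite /= (inj_eq sigma_inj) eq_lrshift.
  - by move=> i j; rewrite -[M i j](block_mxEur 0 M M^T 0) -HA mxE.
  apply: contra chi0 => /eqP detM0.
  rewrite chiA -horner_coef0 horner_comp hornerXn expr0n horner_coef0 g0.
  by rewrite detM0 expr0n mulr0.
rewrite /disc_graph /disc_mx chiT chiA disc_comp_X2 ?char_poly_monic //.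
by rewrite size_char_poly g0 detM2 mulr1 -exprMn mulrN1 opprK exprD -exprMn -natrM.
Qed.
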